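(* In the primal–dual differential form setting below, assume in addition that $\star_h:\hat\Lambda^k_d\to\hat\Lambda^{2-k}_p$ is bijective for $k=1,2$. Let $\sigma(t)\in\hat\Lambda^1_p$ be continuously differentiable in $t$, and let $\tilde Q(t)\in\hat\Lambda^1_d$, $\rho(t)\in\hat\Lambda^2_p$ satisfy $\partial_t\sigma+\star_h\tilde Q+\delta^h\rho=0$. Let $\zeta_p=\delta^h\sigma$ and define the dual vorticity 2-form $\zeta_d\,dS:=\star_h^{-1}\zeta_p\in\hat\Lambda^2_d$ and $\tilde v:=\star_h^{-1}\sigma\in\hat\Lambda^1_d$. Then $\zeta_d\,dS=d\tilde v$ and $$\partial_t(\zeta_d\,dS)+d\tilde Q=0 .$$ Consequently, for every cell $e'$ of the dual mesh, $\frac{d}{dt}\int_{e'}\zeta_d\,dS=-\int_{\partial e'}\tilde Q$, and since the integral of $\tilde Q$ along an edge takes the same value from either adjacent cell (with opposite orientation), $\zeta_d$ is locally conserved.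
   Context: Primal–dual differential form setting. $\Omega$ is a smooth closed oriented two-dimensional Riemannian surface with area form $dS$ and Hodge star $\star$; for $k$-forms $\alpha,\beta$ write $\langle\alpha,\beta\rangle=\int_\Omega\alpha\wedge\star\beta$ (the $L^2$ inner product). For $k=0,1,2$, $\hat\Lambda^k_p$ (primal) and $\hat\Lambda^k_d$ (dual) are finite-dimensional spaces of square-integrable, piecewise smooth $k$-forms on $\Omega$ (on a primal and a dual mesh respectively) on which the exterior derivative $d$ is defined globally, with $d\hat\Lambda^k_p\subset\hat\Lambda^{k+1}_p$ and $d\hat\Lambda^k_d\subset\hat\Lambda^{k+1}_d$ for $k=0,1$, $d^2=0$, and such that integration by parts holds: $\int_\Omega d\alpha\wedge\beta=(-1)^{j+1}\int_\Omega\alpha\wedge d\beta$ for $\alpha$ a $j$-form and $\beta$ a $(1-j)$-form taken from these spaces. $\hat\Lambda^0_p$ contains the constant functions. The discrete codifferential $\delta^h:\hat\Lambda^k_p\to\hat\Lambda^{k-1}_p$ ($k=1,2$) is defined by $\langle\gamma,\delta^h\omega\rangle=\langle d\gamma,\omega\rangle$ for all $\gamma\in\hat\Lambda^{k-1}_p$. The discrete Hodge star $\star_h:\hat\Lambda^k_d\to\hat\Lambda^{2-k}_p$ is defined by $\langle\gamma,\star_h\omega\rangle=(-1)^k\int_\Omega\gamma\wedge\omega$ for all $\gamma\in\hat\Lambda^{2-k}_p$. Elements of $\hat\Lambda^1_d$ have tangentially continuous traces across dual-mesh edges, so that their integral along a dual edge is single-valued, and Stokes' theorem $\int_{e'}d\alpha=\int_{\partial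 e'}\alpha$ holds on each dual cell $e'$ for $\alpha\in\hat\Lambda^1_d$. *)

From Stdlib Require Export Reals.
Open Scope R_scope.

(* Finite-dimensional spaces are represented in coordinates (w.r.t. a fixed
   basis): an element of an n-dimensional space is a vector v : nat -> R of
   which only the entries v i, i < n, are meaningful. *)
Definition vec := nat -> R.
Definition mat := nat -> nat -> R.

Fixpoint sumR (n : nat) (f : nat -> R) : R :=
  match n with O => 0 | S k => sumR k f + f k end.

Definition mv (m : nat) (A : mat) (x : vec) : vec :=
  fun i => sumR m (fun j => A i j * x j).

Definition bil (m n : nat) (B : mat) (x y : vec) : R :=
  sumR m (fun i => sumR n (fun j => x i * B i j * y j)).

Definition dot (n : nat) (u v : vec) : R := sumR n (fun i => u i * v i).

Definition veq (n : nat) (u v : vec) : Prop :=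
  forall i, (i < n)%nat -> u i = v i.

Definition vzero : vec := fun _ => 0.

(* A : (m-dim space) -> (n-dim space) is bijective *)
Definition lin_bij (n m : nat) (A : mat) : Prop :=
  (forall x y, veq n (mv m A x) (mv m A y) -> veq m x y) /\
  (forall y, exists x, veq n (mv m A x) y).

(* Data of the primal-dual setting.
   Primal spaces  Lambda^k_p  have dimension np_k, dual spaces Lambda^k_d
   have dimension nd_k. *)
Record PDSetting := {
  np0 : nat; np1 : nat; np2 : nat;
  nd0 : nat; nd1 : nat; nd2 : nat;
  (* exterior derivatives *)
  dP0 : mat;  (* Lambda^0_p -> Lambda^1_p *)
  dP1 : mat;  (* Lambda^1_p -> Lambda^2_p *)
  dD0 : mat;  (* Lambda^0_d -> Lambda^1_d *)
  dD1 : mat;  (* Lambda^1_d -> Lambda^2_d *)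
  (* L2 inner products <a,b> = int a /\ * b on the primal spaces (Gram matrices) *)
  G0 : mat; G1 : mat; G2 : mat;
  (* wedge pairings  (gamma, omega) |-> int_Omega gamma /\ omega ,
     gamma primal k-form, omega dual (2-k)-form *)
  W0 : mat;   (* Lambda^0_p x Lambda^2_d *)
  W1 : mat;   (* Lambda^1_p x Lambda^1_d *)
  W2 : mat;   (* Lambda^2_p x Lambda^0_d *)
  (* discrete codifferential delta^h *)
  cod1 : mat; (* Lambda^1_p -> Lambda^0_p *)
  cod2 : mat; (* Lambda^2_p -> Lambda^1_p *)
  (* discrete Hodge star *_h : Lambda^k_d -> Lambda^{2-k}_p *)
  hs0 : mat;  (* Lambda^0_d -> Lambda^2_p *)
  hs1 : mat;  (* Lambda^1_d -> Lambda^1_p *)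
  hs2 : mat   (* Lambda^2_d -> Lambda^0_p *)
}.

Definition sym_mat (n : nat) (G : mat) : Prop :=
  forall i j, (i < n)%nat -> (j < n)%nat -> G i j = G j i.

Definition posdef (n : nat) (G : mat) : Prop :=
  forall x, (exists i, (i < n)%nat /\ x i <> 0) -> 0 < bil n n G x x.

Record PDAxioms (S : PDSetting) : Prop := {
  ax_ddP : forall x, veq (np2 S) (mv (np1 S) (dP1 S) (mv (np0 S) (dP0 S) x)) vzero;
  ax_ddD : forall x, veq (nd2 S) (mv (nd1 S) (dD1 S) (mv (nd0 S) (dD0 S) x)) vzero;
  ax_G0sym : sym_mat (np0 S) (G0 S); ax_G0pd : posdef (np0 S) (G0 S);
  ax_G1sym : sym_mat (np1 S) (G1 S); ax_G1pd : posdef (np1 S) (G1 S);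
  ax_G2sym : sym_mat (np2 S) (G2 S); ax_G2pd : posdef (np2 S) (G2 S);
  (* integration by parts: int d a /\ b = (-1)^(j+1) int a /\ d b,
     a primal j-form, b dual (1-j)-form *)
  ax_ibp0 : forall a b,
      bil (np1 S) (nd1 S) (W1 S) (mv (np0 S) (dP0 S) a) b
      = - bil (np0 S) (nd2 S) (W0 S) a (mv (nd1 S) (dD1 S) b);
  ax_ibp1 : forall a b,
      bil (np2 S) (nd0 S) (W2 S) (mv (np1 S) (dP1 S) a) b
      = bil (np1 S) (nd1 S) (W1 S) a (mv (nd0 S) (dD0 S) b);
  (* definition of delta^h : <g, delta^h w> = <d g, w> *)
  ax_cod1 : forall g w,
      bil (np0 S) (np0 S) (G0 S) g (mv (np1 S) (cod1 S) w)
      = bil (np1 S) (np1 S) (G1 S) (mv (np0 S) (dP0 S) g) w;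
  ax_cod2 : forall g w,
      bil (np1 S) (np1 S) (G1 S) g (mv (np2 S) (cod2 S) w)
      = bil (np2 S) (np2 S) (G2 S) (mv (np1 S) (dP1 S) g) w;
  (* definition of *_h : <g, *_h w> = (-1)^k int g /\ w, w dual k-form *)
  ax_hs0 : forall g w,
      bil (np2 S) (np2 S) (G2 S) g (mv (nd0 S) (hs0 S) w)
      = bil (np2 S) (nd0 S) (W2 S) g w;
  ax_hs1 : forall g w,
      bil (np1 S) (np1 S) (G1 S) g (mv (nd1 S) (hs1 S) w)
      = - bil (np1 S) (nd1 S) (W1 S) g w;
  ax_hs2 : forall g w,
      bil (np0 S) (np0 S) (G0 S) g (mv (nd2 S) (hs2 S) w)
      = bil (np0 S) (nd2 S) (W0 S) g w
}.

From Stdlib Require Import Reals Lra Lia IndefiniteDescription.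
Open Scope R_scope.

(* Two discrete identities of the
   setting carry the argument, both obtained by testing against the primal
   L2 inner products, which separate points because they are positive definite:
     (1) *_h d = delta^h *_h   on dual 1-forms    (integration by parts),
     (2) delta^h delta^h = 0                      (dual to d d = 0).
   From (1) and injectivity of *_h on dual 2-forms, *_h zeta = delta^h sigma and
   *_h v = sigma give zeta = d v.  From (1), (2) and the evolution equation, a
   dual 1-form w with *_h w = d_t sigma satisfies d w = - d Q.  Since *_h is a
   linear bijection it has a linear inverse (a matrix), so v, and hence
   zeta = d v, depend linearly on sigma and can be differentiated in time:
   d_t zeta = d w = - d Q.  The cell-wise flux form then follows by applying
   the Stokes relation to d Q. *)

Lemma sumR_ext n f g :
  (forall k, (k < n)%nat -> f k = g k) -> sumR n f = sumR n g.
Proof. induction n as [|n IH]; simpl; intros H; auto. rewrite IH, H; auto. Qed.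

Lemma sumR_add n f g : sumR n (fun k => f k + g k) = sumR n f + sumR n g.
Proof. induction n as [|n IH]; simpl; [lra|]. rewrite IH; lra. Qed.

Lemma sumR_opp n f : sumR n (fun k => - f k) = - sumR n f.
Proof. induction n as [|n IH]; simpl; [lra|]. rewrite IH; lra. Qed.

Lemma sumR_scal n c f : c * sumR n f = sumR n (fun k => c * f k).
Proof. induction n as [|n IH]; simpl; [lra|]. rewrite <- IH; lra. Qed.

Lemma sumR_zero n f : (forall k, (k < n)%nat -> f k = 0) -> sumR n f = 0.
Proof. induction n as [|n IH]; simpl; intros H; auto. rewrite IH, H; auto; lra. Qed.

Lemma sumR_swap n m f :
  sumR n (fun i => sumR m (fun j => f i j))
  = sumR m (fun j => sumR n (fun i => f i j)).
Proof.
  induction n as [|n IH]; simpl.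
  - symmetry; apply sumR_zero; auto.
  - rewrite IH, <- sumR_add; auto.
Qed.

Definition unit_vec (k : nat) : vec := fun i => if Nat.eq_dec i k then 1 else 0.

Lemma sumR_unit_vec n s i :
  (i < n)%nat -> sumR n (fun k => s k * unit_vec k i) = s i.
Proof.
  induction n as [|n IH]; intros Hi; [lia|]. simpl. unfold unit_vec at 2.
  destruct (Nat.eq_dec i n) as [->|Hne].
  - rewrite sumR_zero; [lra|]. intros k Hk. unfold unit_vec.
    destruct (Nat.eq_dec n k); [lia|lra].
  - rewrite IH; [lra|lia].
Qed.

Lemma mv_ext m A x y i : veq m x y -> mv m A x i = mv m A y i.
Proof. intros H. apply sumR_ext; intros j Hj. rewrite H; auto. Qed.

Lemma mv_add m A x y i :
  mv m A (fun j => x j + y j) i = mv m A x i + mv m A y i.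
Proof. unfold mv. rewrite <- sumR_add. apply sumR_ext; intros; ring. Qed.

Lemma mv_opp m A x i : mv m A (fun j => - x j) i = - mv m A x i.
Proof. unfold mv. rewrite <- sumR_opp. apply sumR_ext; intros; ring. Qed.

Lemma bil_ext_l m n B x x' y : veq m x x' -> bil m n B x y = bil m n B x' y.
Proof.
  intros H; unfold bil; apply sumR_ext; intros i Hi; apply sumR_ext; intros.
  rewrite H; auto.
Qed.

Lemma bil_add_r m n B x y z :
  bil m n B x (fun j => y j + z j) = bil m n B x y + bil m n B x z.
Proof.
  unfold bil. rewrite <- sumR_add. apply sumR_ext; intros.
  rewrite <- sumR_add. apply sumR_ext; intros. ring.
Qed.

Lemma bil_opp_r m n B x y : bil m n B x (fun j => - y j) = - bil m n B x y.
Proof.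
  unfold bil. rewrite <- sumR_opp. apply sumR_ext; intros.
  rewrite <- sumR_opp. apply sumR_ext; intros. ring.
Qed.

Lemma bil_zero_l m n B y : bil m n B vzero y = 0.
Proof.
  unfold bil. apply sumR_zero; intros; apply sumR_zero; intros.
  unfold vzero; ring.
Qed.

Lemma bil_zero_r m n B x : bil m n B x vzero = 0.
Proof.
  unfold bil. apply sumR_zero; intros; apply sumR_zero; intros.
  unfold vzero; ring.
Qed.

(* This is how all identities between
   forms are proved from their weak (variational) definitions. *)
Lemma posdef_separates n G x y :
  posdef n G -> (forall g, bil n n G g x = bil n n G g y) -> veq n x y.
Proof.
  intros Hpd H i Hi. destruct (Req_dec (x i) (y i)) as [E|E]; auto. exfalso.
  set (z := fun j => x j + - y j).
  assert (Hz : 0 < bil n n G z z)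
    by (apply Hpd; exists i; split; auto; unfold z; lra).
  unfold z at 2 in Hz. rewrite bil_add_r, bil_opp_r, H in Hz. lra.
Qed.

Lemma lin_bij_inverse n m A :
  lin_bij n m A ->
  exists B : mat,
    (forall y, veq n (mv m A (mv n B y)) y) /\
    (forall x y, veq n (mv m A x) y -> veq m x (mv n B y)).
Proof.
  intros [inj sur].
  destruct (functional_choice (fun k x => veq n (mv m A x) (unit_vec k))
              (fun k => sur (unit_vec k))) as [X HX].
  pose (B := fun j k => X k j).
  assert (Hright : forall y, veq n (mv m A (mv n B y)) y).
  { intros y i Hi. unfold mv, B.
    transitivity (sumR m (fun j => sumR n (fun k => y k * (A i j * X k j)))).
    { apply sumR_ext; intros. rewrite sumR_scal. apply sumR_ext; intros. ring. }
    rewrite sumR_swap, <- (sumR_unit_vec n y i Hi).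
    apply sumR_ext; intros k Hk. rewrite <- sumR_scal. f_equal. apply HX; auto. }
  exists B. split; [exact Hright|].
  intros x y Hxy. apply inj. intros i Hi. rewrite Hxy, Hright; auto.
Qed.

Lemma derivable_pt_lim_sumR n (f : nat -> R -> R) d t :
  (forall k, (k < n)%nat -> derivable_pt_lim (f k) t (d k)) ->
  derivable_pt_lim (fun s => sumR n (fun k => f k s)) t (sumR n d).
Proof.
  induction n as [|n IH]; intros H; simpl.
  - apply derivable_pt_lim_const.
  - apply (derivable_pt_lim_plus (fun s => sumR n (fun k => f k s)) (f n)); auto.
Qed.

Lemma derivable_pt_lim_mv m A (x : R -> vec) x' t i :
  (forall j, (j < m)%nat -> derivable_pt_lim (fun s => x s j) t (x' j)) ->
  derivable_pt_lim (fun s => mv m A (x s) i) t (mv m A x' i).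
Proof.
  intros H. apply derivable_pt_lim_sumR; intros j Hj.
  apply (derivable_pt_lim_scal (fun s => x s j)); auto.
Qed.

Lemma derivable_pt_lim_dot n u (x : R -> vec) x' t :
  (forall j, (j < n)%nat -> derivable_pt_lim (fun s => x s j) t (x' j)) ->
  derivable_pt_lim (fun s => dot n u (x s)) t (dot n u x').
Proof. exact (derivable_pt_lim_mv n (fun _ => u) x x' t O). Qed.

Section DiscreteIdentities.

Variable S : PDSetting.
Hypothesis A : PDAxioms S.

(* (1) *_h d = delta^h *_h on dual 1-forms: for a primal 0-form g,
   <g, *_h d a> = int g /\ d a = - int d g /\ a = <d g, *_h a> = <g, delta^h *_h a>. *)
Lemma hodge_d_commute a :
  veq (np0 S) (mv (nd2 S) (hs2 S) (mv (nd1 S) (dD1 S) a))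
              (mv (np1 S) (cod1 S) (mv (nd1 S) (hs1 S) a)).
Proof.
  apply (posdef_separates _ (G0 S)); [apply (ax_G0pd S A)|]. intros g.
  rewrite (ax_hs2 S A), (ax_cod1 S A), (ax_hs1 S A), (ax_ibp0 S A). ring.
Qed.

(* (2) delta^h delta^h = 0, the adjoint of d d = 0. *)
Lemma codiff_codiff r :
  veq (np0 S) (mv (np1 S) (cod1 S) (mv (np2 S) (cod2 S) r)) vzero.
Proof.
  apply (posdef_separates _ (G0 S)); [apply (ax_G0pd S A)|]. intros g.
  rewrite (ax_cod1 S A), (ax_cod2 S A), (bil_ext_l _ _ _ _ vzero _ (ax_ddP S A g)).
  rewrite bil_zero_l, bil_zero_r. reflexivity.
Qed.

Hypothesis hs2_inj : forall x y,
  veq (np0 S) (mv (nd2 S) (hs2 S) x) (mv (nd2 S) (hs2 S) y) -> veq (nd2 S) x y.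

Lemma vorticity_is_curl zeta v sigma :
  veq (np0 S) (mv (nd2 S) (hs2 S) zeta) (mv (np1 S) (cod1 S) sigma) ->
  veq (np1 S) (mv (nd1 S) (hs1 S) v) sigma ->
  veq (nd2 S) zeta (mv (nd1 S) (dD1 S) v).
Proof.
  intros Hzeta Hv. apply hs2_inj. intros i Hi.
  rewrite Hzeta, hodge_d_commute by exact Hi. apply mv_ext.
  intros j Hj. symmetry; apply Hv, Hj.
Qed.

Lemma curl_of_balance a b r :
  veq (np1 S) (fun i => mv (nd1 S) (hs1 S) a i + mv (nd1 S) (hs1 S) b i
                        + mv (np2 S) (cod2 S) r i) vzero ->
  veq (nd2 S) (mv (nd1 S) (dD1 S) a) (fun i => - mv (nd1 S) (dD1 S) b i).
Proof.
  intros Hbal. apply hs2_inj. intros i Hi.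
  rewrite hodge_d_commute, mv_opp, hodge_d_commute by exact Hi.
  rewrite (mv_ext _ _ _ (fun j => - mv (nd1 S) (hs1 S) b j
                                  + - mv (np2 S) (cod2 S) r j)).
  - rewrite mv_add, !mv_opp, (codiff_codiff r i Hi). unfold vzero. ring.
  - intros j Hj. specialize (Hbal j Hj). unfold vzero in Hbal. lra.
Qed.

End DiscreteIdentities.

Theorem mainTheorem13 :
  forall (S : PDSetting), PDAxioms S ->
  (* *_h bijective for k = 1, 2 *)
  lin_bij (np1 S) (nd1 S) (hs1 S) ->
  lin_bij (np0 S) (nd2 S) (hs2 S) ->
  forall (sigma sigma' Qt rho : R -> vec),
  (* sigma is C^1 in t with derivative sigma' *)
  (forall t i, (i < np1 S)%nat ->
     derivable_pt_lim (fun s => sigma s i) t (sigma' t i)) ->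
  (forall i, (i < np1 S)%nat -> continuity (fun t => sigma' t i)) ->
  (* d_t sigma + *_h Q + delta^h rho = 0 *)
  (forall t, veq (np1 S)
     (fun i => sigma' t i + mv (nd1 S) (hs1 S) (Qt t) i
               + mv (np2 S) (cod2 S) (rho t) i) vzero) ->
  forall (zeta vt : R -> vec),
  (* zeta_d dS = *_h^{-1} (delta^h sigma),  vt = *_h^{-1} sigma *)
  (forall t, veq (np0 S) (mv (nd2 S) (hs2 S) (zeta t))
                         (mv (np1 S) (cod1 S) (sigma t))) ->
  (forall t, veq (np1 S) (mv (nd1 S) (hs1 S) (vt t)) (sigma t)) ->
  (* zeta_d dS = d vt *)
  (forall t, veq (nd2 S) (zeta t) (mv (nd1 S) (dD1 S) (vt t))) /\
  (* d_t (zeta_d dS) + d Q = 0 *)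
  (forall t i, (i < nd2 S)%nat ->
     derivable_pt_lim (fun s => zeta s i) t (- mv (nd1 S) (dD1 S) (Qt t) i)) /\
  (* cell-wise flux form: dual cells c < ncell with integral functionals
     cellI c on Lambda^2_d, dual edges e < nedge with (single-valued) edge
     integral functionals edgeI e on Lambda^1_d, signed incidence inc c e,
     and Stokes' theorem on each dual cell *)
  (forall (ncell nedge : nat) (cellI edgeI : nat -> vec) (inc : nat -> nat -> R),
     (forall c alpha, (c < ncell)%nat ->
        dot (nd2 S) (cellI c) (mv (nd1 S) (dD1 S) alpha)
        = sumR nedge (fun e => inc c e * dot (nd1 S) (edgeI e) alpha)) ->
     forall c t, (c < ncell)%nat ->
       derivable_pt_lim (fun s => dot (nd2 S) (cellI c) (zeta s)) t
         (- sumR nedge (fun e => inc c e * dot (nd1 S) (edgeI e) (Qt t)))).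
Proof.
  intros S A bij1 [inj2 _] sigma sigma' Qt rho Hderiv _ Hevol zeta vt Hzeta Hvt.
  destruct (lin_bij_inverse _ _ _ bij1) as [star1_inv [Hright Hunique]].
  assert (Hcurl : forall t, veq (nd2 S) (zeta t) (mv (nd1 S) (dD1 S) (vt t)))
    by (intros t; exact (vorticity_is_curl S A inj2 _ _ _ (Hzeta t) (Hvt t))).
  assert (Hvel : forall s, veq (nd1 S) (vt s) (mv (np1 S) star1_inv (sigma s)))
    by (intros s; apply Hunique, Hvt).
  assert (Hflux : forall t, veq (nd2 S)
            (mv (nd1 S) (dD1 S) (mv (np1 S) star1_inv (sigma' t)))
            (fun i => - mv (nd1 S) (dD1 S) (Qt t) i)).
  { intros t. apply (curl_of_balance S A inj2 _ _ (rho t)). intros i Hi.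
    rewrite Hright by exact Hi. apply Hevol, Hi. }
  assert (Hvort : forall t i, (i < nd2 S)%nat ->
     derivable_pt_lim (fun s => zeta s i) t (- mv (nd1 S) (dD1 S) (Qt t) i)).
  { intros t i Hi. rewrite <- (Hflux t i Hi).
    apply (derivable_pt_lim_ext
             (fun s => mv (nd1 S) (dD1 S) (mv (np1 S) star1_inv (sigma s)) i)).
    - intros s. rewrite Hcurl by exact Hi. symmetry. apply mv_ext, Hvel.
    - apply derivable_pt_lim_mv; intros j _.
      apply derivable_pt_lim_mv; intros k Hk. apply Hderiv, Hk. }
  split; [exact Hcurl|]. split; [exact Hvort|].
  intros ncell nedge cellI edgeI inc Hstokes c t Hc.
  rewrite <- Hstokes by exact Hc.
  replace (- dot (nd2 S) (cellI c) (mv (nd1 S) (dD1 S) (Qt t)))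
    with (dot (nd2 S) (cellI c) (fun i => - mv (nd1 S) (dD1 S) (Qt t) i))
    by (unfold dot; rewrite <- sumR_opp; apply sumR_ext; intros; ring).
  apply derivable_pt_lim_dot; intros i Hi. apply Hvort, Hi.
Qed.
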